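(* Fix $k\in\mathbb{Z}_{\ge0}$. Let $S$ be a ubiquitously dense subset of $[0,\infty)$ and $R=(r_i)_{i\in\mathbb{Z}_{\ge0}}$ an $S$-gauge system on $\Omega$. Then the function $\tilde\Lambda^k[R]\colon N(\Omega)\times N(\Omega)\to[0,\infty)$ satisfies: (1) $\tilde\Lambda^k[R]\in\mathrm{Met}(N(\Omega))$; (2) the diameter of $N(\Omega)$ with respect to $\tilde\Lambda^k[R]$ is at most $2\cdot2^{-F_k(0)}=2^{-k}$; (3) $\tilde\Lambda^k[R]$ is complete; (4) $\tilde\Lambda^k[R]$ is strongly rigid.
   Context: A subset $S$ of $[0,\infty)$ is ubiquitously dense if $\operatorname{card}(U\cap S)=\operatorname{card}(S)$ for every non-empty open $U\subseteq[0,\infty)$. Fix a bijection $Q\colon\mathbb{Z}_{\ge0}\to\mathbb{Q}_{\ge0}$ with property (M): setting $\mu_m=\min Q^{-1}([m,m+1)\cap\mathbb{Q})$, we have $Q(\mu_m)=m$ and $\mu_m<\mu_{m+1}$ for all $m$. For a summable sequence $\alpha=(a_i)$ of positive reals and $B\subseteq\mathbb{Q}_{\ge0}$, $\langle\alpha,B\rangle=\sum_{i:\,Q(i)\in B}a_i$ ($=0$ if $B=\emptyset$). For $k\in\mathbb{Z}_{\ge0}$ let $F_k(n)=2^n+k$ and $\lambda^k_i=2^{-F_k(i)}$, $\lambda^k=(\lambda^k_i)_{i\ge0}$. $\Omega$ is a discrete space of cardinality $\mathfrak{c}$ and $N(\Omega)=\Omega^{\mathbb{Z}_{\ge0}}$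 with the product topology. For $T\subseteq[0,\infty)$, a $T$-semi-metric on a set $Y$ is a symmetric map $r\colon Y\times Y\to[0,\infty)$ with $r(x,y)=0$ iff $x=y$ and $r(x,y)\in T$ for $x\ne y$; it (or a metric) is strongly rigid if $r(x,y)=r(u,v)\neq0$ implies $\{x,y\}=\{u,v\}$. For dense $S\subseteq[0,\infty)$, an $S$-gauge system on $\Omega$ is a sequence $(r_i)_{i\ge0}$ with each $r_i$ a strongly rigid $(S\cap(i,i+1))$-semi-metric on $\Omega$. Put $J(m,t)=[m,t)\cap\mathbb{Q}$, $\Lambda^k_m[r](a,b)=\langle\lambda^k,J(m,r(a,b))\rangle$ for $a,b\in\Omega$, and for $x=(x_i),y=(y_i)\in N(\Omega)$, $\Lambda^k[R](x,y)=\sum_{m\ge0}\Lambda^k_m[r_m](x_m,y_m)=\langle\lambda^k,\bigsqcup_{m\ge0}J(m,r_m(x_m,y_m))\rangle$. For each $n\in\mathbb{Z}_{\ge0}$ fix an injective map $f_n\colon\Omega^{n+1}\to\Omega$, and define $\Phi\colon N(\Omega)\to N(\Omega)$ by $\Phi(x)_{2n}=x_n$, $\Phi(x)_{2n+1}=f_n(x_0,\dots,x_n)$. Finally $\tilde\Lambda^k[R](x,y)=\Lambda^k[R](\Phi(x),\Phi(y))$. $\mathrm{Met}(Y)$ is the set of metrics on $Y$ generating its topology. *)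

From Stdlib Require Import Reals Lra Lia List.
From Coquelicot Require Import Coquelicot.
Open Scope R_scope.

Definition is_rat (x : R) : Prop :=
  exists (a : Z) (b : Z), (b > 0)%Z /\ x = IZR a / IZR b.

Definition enum_nonneg_rat (Q : nat -> R) : Prop :=
  (forall i, 0 <= Q i /\ is_rat (Q i)) /\
  (forall i j, Q i = Q j -> i = j) /\
  (forall x, 0 <= x -> is_rat x -> exists i, Q i = x).

Definition propM (Q : nat -> R) : Prop :=
  exists mu : nat -> nat,
    forall m : nat,
      (INR m <= Q (mu m) < INR m + 1) /\
      (forall i, INR m <= Q i < INR m + 1 -> (mu m <= i)%nat) /\
      Q (mu m) = INR m /\
      (mu m < mu (S m))%nat.

(* <alpha, B> = sum_{i : Q(i) in B} a_i, for a (decidable) subset B. *)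
Definition pairing (Q : nat -> R) (a : nat -> R) (B : R -> bool) : R :=
  Series (fun i => if B (Q i) then a i else 0).

(* J(m,t) = [m,t) ∩ Q (membership test, applied only to rationals Q i) *)
Definition inJ (m : nat) (t : R) (x : R) : bool :=
  if Rle_dec (INR m) x then (if Rlt_dec x t then true else false) else false.

Definition F (k n : nat) : nat := (2 ^ n + k)%nat.
Definition lam (k i : nat) : R := / 2 ^ (F k i).

Definition card_eq (A B : R -> Prop) : Prop :=
  exists g : {x : R | A x} -> {x : R | B x},
    (forall u v, g u = g v -> u = v) /\ (forall w, exists u, g u = w).

Definition open_nonneg (U : R -> Prop) : Prop :=
  (forall x, U x -> 0 <= x) /\
  (forall x, U x -> exists eps, eps > 0 /\
     forall y, 0 <= y -> Rabs (y - x) < eps -> U y).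

Definition ubiq_dense (S : R -> Prop) : Prop :=
  (forall x, S x -> 0 <= x) /\
  forall U : R -> Prop, open_nonneg U -> (exists x, U x) ->
    card_eq (fun x => U x /\ S x) S.

Definition semi_metric_in {Y : Type} (T : R -> Prop) (r : Y -> Y -> R) : Prop :=
  (forall x y, 0 <= r x y) /\
  (forall x y, r x y = r y x) /\
  (forall x y, r x y = 0 <-> x = y) /\
  (forall x y, x <> y -> T (r x y)).

Definition strongly_rigid {Y : Type} (r : Y -> Y -> R) : Prop :=
  forall x y u v, r x y = r u v -> r x y <> 0 ->
    (x = u /\ y = v) \/ (x = v /\ y = u).

Definition gauge_system {Om : Type} (S : R -> Prop) (r : nat -> Om -> Om -> R)
  : Prop :=
  forall i : nat,
    semi_metric_in (fun t => S t /\ INR i < t < INR i + 1) (r i) /\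
    strongly_rigid (r i).

Definition LambdaM (Q : nat -> R) (k m : nat) {Om : Type}
  (rm : Om -> Om -> R) (a b : Om) : R :=
  pairing Q (lam k) (inJ m (rm a b)).

Definition Lambda (Q : nat -> R) (k : nat) {Om : Type}
  (r : nat -> Om -> Om -> R) (x y : nat -> Om) : R :=
  Series (fun m => LambdaM Q k m (r m) (x m) (y m)).

(* f n : Omega^{n+1} -> Omega, with Omega^{n+1} encoded as lists of length n+1 *)
Definition inj_on_len {Om : Type} (f : nat -> list Om -> Om) : Prop :=
  forall n l1 l2, length l1 = S n -> length l2 = S n ->
    f n l1 = f n l2 -> l1 = l2.

Definition Phi {Om : Type} (f : nat -> list Om -> Om) (x : nat -> Om)
  : nat -> Om :=
  fun j => if Nat.even j then x (Nat.div2 j)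
           else f (Nat.div2 j) (map x (seq 0 (S (Nat.div2 j)))).

Definition tLambda (Q : nat -> R) (k : nat) {Om : Type}
  (r : nat -> Om -> Om -> R) (f : nat -> list Om -> Om) (x y : nat -> Om) : R :=
  Lambda Q k r (Phi f x) (Phi f y).

Definition card_continuum (Om : Type) : Prop :=
  exists g : Om -> R, (forall a b, g a = g b -> a = b) /\ (forall t, exists a, g a = t).

Definition is_metric {Y : Type} (d : Y -> Y -> R) : Prop :=
  (forall x y, 0 <= d x y) /\
  (forall x y, d x y = 0 <-> x = y) /\
  (forall x y, d x y = d y x) /\
  (forall x y z, d x z <= d x y + d y z).

(* product topology of discrete spaces: basic opens are cylinders *)
Definition prod_open {Om : Type} (U : (nat -> Om) -> Prop) : Prop :=
  forall x, U x -> exists n : nat,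
    forall y, (forall i, (i < n)%nat -> y i = x i) -> U y.

Definition metric_open {Y : Type} (d : Y -> Y -> R) (U : Y -> Prop) : Prop :=
  forall x, U x -> exists eps, eps > 0 /\ forall y, d x y < eps -> U y.

Definition Met_N {Om : Type} (d : (nat -> Om) -> (nat -> Om) -> R) : Prop :=
  is_metric d /\ forall U, prod_open U <-> metric_open d U.

Definition complete_metric {Y : Type} (d : Y -> Y -> R) : Prop :=
  forall u : nat -> Y,
    (forall eps, eps > 0 -> exists N, forall n m, (N <= n)%nat -> (N <= m)%nat ->
        d (u n) (u m) < eps) ->
    exists l, forall eps, eps > 0 -> exists N, forall n, (N <= n)%nat -> d (u n) l < eps.

From Stdlib Require Import Reals List Lra Lia Classical FunctionalExtensionality ClassicalEpsilon.
From Coquelicot Require Import Coquelicot.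
Open Scope R_scope.
Open Scope bool_scope.

(* The weights [lam k i = 2^-(2^i + k)] shrink so fast that each one exceeds the sum of all
   later ones; hence, as for binary expansions, the weight of a set of indices determines the
   set.  [Lambda] is the weight of the union of the disjoint bands [J(m, r_m(x_m, y_m))]
   (pulled back along [Q]), so equal distances force equal bands and, by density of the
   rationals, equal values [r_m(x_m, y_m)] for every [m].  Strong rigidity of each [r_m] then
   matches [{x_m, y_m}] with [{u_m, v_m}]; the odd coordinates [f_n(x_0, ..., x_n)] of [Phi]
   force these matchings to be made in the same order for all [m].  The remaining properties
   come from the two-sided estimate: [tLambda x y >= lam (mu (2n))] if [x_n <> y_n], and
   [tLambda x y <= 2 lam (2n)] if [x] and [y] agree below [n]. *)

(* [pairing Q a B] unfolds to [wsum a (fun i => B (Q i))]. *)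
Definition wsum (a : nat -> R) (D : nat -> bool) : R :=
  Series (fun i => if D i then a i else 0).

Definition super_halving (a : nat -> R) : Prop :=
  (forall n, 0 < a n) /\
  (forall n, 2 * a (S n) <= a n) /\
  (forall n, 2 * a (S (S n)) < a (S n)).

Lemma Series_zero : Series (fun _ => 0) = 0.
Proof.
  rewrite (Series_ext _ (fun _ => 0 * 0)) by (intros; ring).
  rewrite (Series_scal_l 0 (fun _ => 0)). ring.
Qed.

Section SuperHalving.
Context {a : nat -> R} (Ha : super_halving a).

Lemma super_halving_pos n : 0 < a n.
Proof. apply Ha. Qed.

Lemma super_halving_half n : 2 * a (S n) <= a n.
Proof. apply Ha. Qed.

Lemma super_halving_half_strict n : 2 * a (S (S n)) < a (S n).
Proof. apply Ha. Qed.

Lemma super_halving_le_geom n d : a (n + d) <= a n * (1/2) ^ d.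
Proof.
  induction d as [|d IH].
  - rewrite Nat.add_0_r. simpl. lra.
  - rewrite Nat.add_succ_r. simpl. pose proof (super_halving_half (n + d)). lra.
Qed.

Lemma super_halving_antitone i j : (i <= j)%nat -> a j <= a i.
Proof.
  induction 1 as [|j _ IH]; [lra|].
  pose proof (super_halving_half j). pose proof (super_halving_pos (S j)). lra.
Qed.

Lemma super_halving_cvg0 : is_lim_seq a 0.
Proof.
  apply (is_lim_seq_le_le (fun _ => 0) _ (fun n => a 0%nat * (1/2) ^ n)).
  - intros n. split; [left; apply super_halving_pos|apply (super_halving_le_geom 0 n)].
  - apply is_lim_seq_const.
  - replace (Finite 0) with (Finite (a 0%nat * 0)) by (f_equal; ring).
    apply (is_lim_seq_scal_l _ (a 0%nat) 0), is_lim_seq_geom. rewrite Rabs_pos_eq; lra.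
Qed.

Lemma ex_series_wsum (D : nat -> bool) : ex_series (fun i => if D i then a i else 0).
Proof.
  apply (@ex_series_le R_AbsRing R_CompleteNormedModule _ (fun i : nat => a 0%nat * (1/2) ^ i)).
  - intros n. change (Rabs (if D n then a n else 0) <= a 0%nat * (1/2) ^ n).
    pose proof (super_halving_pos n). pose proof (super_halving_le_geom 0 n).
    pose proof (pow_le (1/2) n). pose proof (super_halving_pos 0).
    simpl in *. destruct (D n); [rewrite Rabs_pos_eq by lra|rewrite Rabs_R0]; nra.
  - apply (@ex_series_scal_l R_AbsRing R_NormedModule), ex_series_geom.
    rewrite Rabs_pos_eq; lra.
Qed.

Lemma wsum_ge0 D : 0 <= wsum a D.
Proof.
  rewrite <- Series_zero. apply Series_le; [|apply ex_series_wsum].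
  intros n. pose proof (super_halving_pos n). destruct (D n); lra.
Qed.

Lemma wsum_le D D' : (forall i, D i = true -> D' i = true) -> wsum a D <= wsum a D'.
Proof.
  intros HDD'. apply Series_le; [|apply ex_series_wsum].
  intros n. pose proof (super_halving_pos n).
  destruct (D n) eqn:E; [rewrite (HDD' n E)|destruct (D' n)]; lra.
Qed.

Lemma wsum_eq0 D : (forall i, D i = false) -> wsum a D = 0.
Proof.
  intros HD. rewrite <- Series_zero. apply Series_ext. intros n. now rewrite HD.
Qed.

Lemma wsum_orb D E : (forall i, D i = true -> E i = false) ->
  wsum a (fun i => D i || E i) = wsum a D + wsum a E.
Proof.
  intros HDE. unfold wsum. rewrite <- Series_plus by apply ex_series_wsum.
  apply Series_ext. intros n.
  destruct (D n) eqn:E1; [rewrite (HDE n E1)|]; simpl; ring.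
Qed.

Lemma wsum_split D n : wsum a D =
  wsum a (fun i => D i && (i <? n)%nat) + wsum a (fun i => D i && (n <=? i)%nat).
Proof.
  rewrite <- wsum_orb.
  - apply Series_ext. intros i.
    destruct (D i), (Nat.ltb_spec i n), (Nat.leb_spec n i); simpl; auto; lia.
  - intros i. destruct (D i), (Nat.ltb_spec i n), (Nat.leb_spec n i); simpl; auto; lia.
Qed.

Lemma wsum_tail_le D N : (forall i, D i = true -> (N <= i)%nat) -> wsum a D <= 2 * a N.
Proof.
  intros HD. unfold wsum. rewrite (Series_incr_n_aux _ N).
  2:{ intros i Hi. destruct (D i) eqn:E; [apply HD in E; lia|auto]. }
  replace (2 * a N) with (Series (fun j => a N * (1/2) ^ j)).
  2:{ rewrite Series_scal_l, Series_geom by (rewrite Rabs_pos_eq; lra). field. }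
  apply Series_le.
  - intros j. pose proof (super_halving_pos (N + j)). pose proof (super_halving_le_geom N j).
    destruct (D (N + j)%nat); lra.
  - apply (@ex_series_scal_l R_AbsRing R_NormedModule), ex_series_geom.
    rewrite Rabs_pos_eq; lra.
Qed.

Lemma wsum_pred1 i : wsum a (fun j => (j =? i)%nat) = a i.
Proof.
  unfold wsum. rewrite (Series_incr_n_aux _ i).
  2:{ intros j Hj. destruct (Nat.eqb_spec j i); [lia|auto]. }
  rewrite Series_incr_1.
  2:{ apply (ex_series_incr_n (fun j => if (j =? i)%nat then a j else 0) i), ex_series_wsum. }
  rewrite (Series_ext _ (fun _ => 0)), Series_zero.
  - rewrite Nat.add_0_r, Nat.eqb_refl. ring.
  - intros j. destruct (Nat.eqb_spec (i + S j) i); [lia|auto].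
Qed.

Lemma wsum_ge_single D i : D i = true -> a i <= wsum a D.
Proof.
  intros Hi. rewrite <- wsum_pred1. apply wsum_le.
  intros j Hj. apply Nat.eqb_eq in Hj. now subst.
Qed.

(* The tail beyond [n] is at most [a (S n) + 2 a (S (S n))], which the strict halving
   makes [< 2 a (S n) <= a n]. *)
Lemma wsum_tail_lt D n : (forall i, D i = true -> (S n <= i)%nat) -> wsum a D < a n.
Proof.
  intros HD. rewrite (wsum_split D (S (S n))).
  assert (Hhead : wsum a (fun i => D i && (i <? S (S n))%nat) <= a (S n)).
  { rewrite <- wsum_pred1. apply wsum_le. intros i Hi.
    apply andb_prop in Hi as [Hi1 Hi2]. apply HD in Hi1. apply Nat.ltb_lt in Hi2.
    apply Nat.eqb_eq. lia. }
  assert (Htail : wsum a (fun i => D i && (S (S n) <=? i)%nat) <= 2 * a (S (S n))).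
  { apply wsum_tail_le. intros i Hi. apply andb_prop in Hi as [_ Hi]. now apply Nat.leb_le. }
  pose proof (super_halving_half n). pose proof (super_halving_half_strict n). lra.
Qed.

(* At the first index [n] where [D] and [D'] differ, one side gains [a n], more than the
   whole remaining tail of the other. *)
Lemma wsum_inj D D' : wsum a D = wsum a D' -> forall i, D i = D' i.
Proof.
  intros Hw.
  assert (Hprefix : forall n i, (i < n)%nat -> D i = D' i).
  { induction n as [|n IH]; intros i Hi; [lia|].
    destruct (Nat.eq_dec i n) as [->|Hne]; [|apply IH; lia].
    assert (Hhead : wsum a (fun j => D j && (j <? n)%nat) =
                    wsum a (fun j => D' j && (j <? n)%nat)).
    { apply Series_ext. intros j.
      destruct (Nat.ltb_spec j n); [now rewrite IH|now rewrite !Bool.andb_false_r]. }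
    rewrite (wsum_split D n), (wsum_split D' n), Hhead in Hw.
    assert (Hdiff : forall E E', E n = true -> E' n = false ->
      wsum a (fun j => E' j && (n <=? j)%nat) < wsum a (fun j => E j && (n <=? j)%nat)).
    { intros E E' HE HE'. eapply Rlt_le_trans; [|apply wsum_ge_single with (i := n)].
      - apply wsum_tail_lt. intros j Hj. apply andb_prop in Hj as [Hj1 Hj2].
        apply Nat.leb_le in Hj2. destruct (Nat.eq_dec j n); [congruence|lia].
      - now rewrite HE, Nat.leb_refl. }
    destruct (D n) eqn:E1, (D' n) eqn:E2; auto;
      [pose proof (Hdiff D D' E1 E2)|pose proof (Hdiff D' D E2 E1)]; lra. }
  intros i. apply (Hprefix (S i)). lia.
Qed.
End SuperHalving.

Section DisjointUnion.
Context {a : nat -> R} (Ha : super_halving a).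
Variable Dm : nat -> nat -> bool.
Hypothesis Dm_ge : forall m i, Dm m i = true -> (m <= i)%nat.
Hypothesis Dm_disjoint : forall m m' i, Dm m i = true -> Dm m' i = true -> m = m'.

Definition bigcup_upto (M i : nat) : bool := existsb (fun m => Dm m i) (seq 0 (S M)).
Definition bigcup (i : nat) : bool := bigcup_upto i i.

Lemma bigcup_uptoP M i : bigcup_upto M i = true <-> exists m, (m <= M)%nat /\ Dm m i = true.
Proof.
  unfold bigcup_upto. rewrite existsb_exists. split.
  - intros [m [Hin Hm]]. apply in_seq in Hin. exists m. split; [lia|auto].
  - intros [m [Hle Hm]]. exists m. split; [apply in_seq; lia|auto].
Qed.

Lemma bigcupP i : bigcup i = true <-> exists m, Dm m i = true.
Proof.
  unfold bigcup. rewrite bigcup_uptoP. split.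
  - intros [m [_ Hm]]. eauto.
  - intros [m Hm]. exists m. split; [apply Dm_ge|]; auto.
Qed.

Lemma sum_n_wsum M : sum_n (fun m => wsum a (Dm m)) M = wsum a (bigcup_upto M).
Proof.
  induction M as [|M IH].
  - rewrite sum_O. apply Series_ext. intros i. unfold bigcup_upto. simpl.
    now rewrite Bool.orb_false_r.
  - rewrite sum_Sn, IH. change (wsum a (bigcup_upto M) + wsum a (Dm (S M)) =
      wsum a (bigcup_upto (S M))).
    rewrite <- (wsum_orb Ha).
    + apply Series_ext. intros i. unfold bigcup_upto.
      rewrite (seq_S (S M) 0), existsb_app. simpl. now rewrite Bool.orb_false_r.
    + intros i Hi. apply bigcup_uptoP in Hi as [m [Hm1 Hm2]].
      destruct (Dm (S M) i) eqn:E; auto. pose proof (Dm_disjoint _ _ _ Hm2 E). lia.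
Qed.

Lemma is_series_wsum_bigcup : is_series (fun m => wsum a (Dm m)) (wsum a bigcup).
Proof.
  change (is_lim_seq (sum_n (fun m => wsum a (Dm m))) (wsum a bigcup)).
  apply (is_lim_seq_le_le (fun M => wsum a bigcup - 2 * a (S M)) _ (fun _ => wsum a bigcup)).
  - intros M. rewrite sum_n_wsum. split.
    + rewrite (wsum_split Ha bigcup (S M)).
      assert (Hhead : wsum a (fun j => bigcup j && (j <? S M)%nat) <= wsum a (bigcup_upto M)).
      { apply (wsum_le Ha). intros j Hj. apply andb_prop in Hj as [Hj1 Hj2].
        apply bigcupP in Hj1 as [m Hm]. apply Nat.ltb_lt in Hj2.
        apply bigcup_uptoP. exists m. split; auto. pose proof (Dm_ge _ _ Hm). lia. }
      assert (Htail : wsum a (fun j => bigcup j && (S M <=? j)%nat) <= 2 * a (S M)).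
      { apply (wsum_tail_le Ha). intros j Hj. apply andb_prop in Hj as [_ Hj].
        now apply Nat.leb_le. }
      lra.
    + apply (wsum_le Ha). intros j Hj. apply bigcup_uptoP in Hj as [m [_ Hm]].
      apply bigcupP. eauto.
  - replace (Finite (wsum a bigcup)) with (Finite (wsum a bigcup - 2 * 0)) by (f_equal; ring).
    apply is_lim_seq_minus'; [apply is_lim_seq_const|].
    apply (is_lim_seq_scal_l _ 2 0). apply (is_lim_seq_incr_1 a 0), (super_halving_cvg0 Ha).
  - apply is_lim_seq_const.
Qed.
End DisjointUnion.

Lemma lam_le_pow2 k i j e : (F k i + e <= F k j)%nat -> 2 ^ e * lam k j <= lam k i.
Proof.
  intros H. unfold lam.
  assert (Hij : 2 ^ F k i * 2 ^ e <= 2 ^ F k j)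
    by (rewrite <- pow_add; apply Rle_pow; lra || lia).
  pose proof (pow_lt 2 e ltac:(lra)). pose proof (pow_lt 2 (F k i) ltac:(lra)).
  pose proof (pow_lt 2 (F k j) ltac:(lra)).
  replace (2 ^ e * / 2 ^ F k j) with (/ (2 ^ F k j / 2 ^ e)) by (field; lra).
  apply Rinv_le_contravar; [auto|]. apply Rle_div_r; lra.
Qed.

Lemma lam_super_halving k : super_halving (lam k).
Proof.
  assert (Hpos : forall n, 0 < lam k n) by (intros n; apply Rinv_0_lt_compat, pow_lt; lra).
  assert (Hstep : forall n e, (e <= 2 ^ n)%nat -> 2 ^ e * lam k (S n) <= lam k n).
  { intros n e He. apply lam_le_pow2. unfold F. rewrite Nat.pow_succ_r'. lia. }
  split; [auto|split]; intros n.
  - pose proof (Nat.pow_nonzero 2 n ltac:(lia)).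
    pose proof (Hstep n 1%nat ltac:(lia)). simpl in *. lra.
  - pose proof (Hstep (S n) 2%nat) as H2. pose proof (Hpos (S (S n))).
    rewrite Nat.pow_succ_r' in H2. pose proof (Nat.pow_nonzero 2 n ltac:(lia)).
    specialize (H2 ltac:(lia)). simpl in H2. lra.
Qed.

Lemma inJ_iff m t q : inJ m t q = true <-> INR m <= q < t.
Proof.
  unfold inJ. destruct (Rle_dec (INR m) q), (Rlt_dec q t); split; intros H;
    solve [auto | discriminate | lra].
Qed.

Lemma INR_floor_unique m m' q :
  INR m <= q < INR m + 1 -> INR m' <= q < INR m' + 1 -> m = m'.
Proof.
  intros H H'. destruct (Nat.lt_total m m') as [Hlt|[Heq|Hlt]]; auto;
    apply le_INR in Hlt; rewrite S_INR in Hlt; lra.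
Qed.

Lemma rat_between a b : a < b -> exists q, a < q < b /\ is_rat q.
Proof.
  intros Hab. destruct (archimed (/ (b - a))) as [Hden _].
  set (den := up (/ (b - a))) in *.
  assert (Hinv : 0 < / (b - a)) by (apply Rinv_0_lt_compat; lra).
  assert (Hden0 : 0 < IZR den) by lra.
  destruct (archimed (a * IZR den)) as [Hnum1 Hnum2].
  set (num := up (a * IZR den)) in *.
  assert (Hgap : 1 < (b - a) * IZR den).
  { apply (Rmult_lt_compat_l (b - a)) in Hden; [|lra]. rewrite Rinv_r in Hden; lra. }
  exists (IZR num / IZR den). split; [split|].
  - apply (Rmult_lt_reg_r (IZR den)); auto. unfold Rdiv. rewrite Rmult_assoc, Rinv_l; lra.
  - apply (Rmult_lt_reg_r (IZR den)); auto. unfold Rdiv. rewrite Rmult_assoc, Rinv_l; lra.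
  - exists num, den. split; auto. apply lt_0_IZR in Hden0. lia.
Qed.

Lemma strict_mono_ge_id (g : nat -> nat) : (forall m, (g m < g (S m))%nat) ->
  forall m, (m <= g m)%nat.
Proof. intros Hg m. induction m; [lia|]. specialize (Hg m). lia. Qed.

Lemma strict_mono_le (g : nat -> nat) : (forall m, (g m < g (S m))%nat) ->
  forall m m', (m <= m')%nat -> (g m <= g m')%nat.
Proof. intros Hg m m' H. induction H; [lia|]. specialize (Hg m0). lia. Qed.

Section Interleave.
Context {Om : Type} (f : nat -> list Om -> Om).

Lemma Phi_even x n : Phi f x (2 * n) = x n.
Proof. unfold Phi. now rewrite Nat.even_even, Nat.div2_double. Qed.

Lemma Phi_odd x n : Phi f x (S (2 * n)) = f n (map x (seq 0 (S n))).
Proof.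
  unfold Phi. replace (S (2 * n)) with (2 * n + 1)%nat by lia.
  rewrite Nat.even_odd. replace (2 * n + 1)%nat with (S (2 * n)) by lia.
  now rewrite Nat.div2_succ_double.
Qed.

Lemma Phi_agree x y n : (forall i, (i < n)%nat -> x i = y i) ->
  forall j, (j < 2 * n)%nat -> Phi f x j = Phi f y j.
Proof.
  intros Hagree j Hj. unfold Phi. pose proof (Nat.div2_odd j) as Hdiv.
  assert (Hhalf : (Nat.div2 j < n)%nat) by (destruct (Nat.odd j); simpl in Hdiv; lia).
  destruct (Nat.even j); [auto|].
  f_equal. apply map_ext_in. intros i Hi. apply in_seq in Hi. apply Hagree. lia.
Qed.

Hypothesis f_inj : inj_on_len f.

Lemma Phi_odd_inj x y n : Phi f x (S (2 * n)) = Phi f y (S (2 * n)) ->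
  forall i, (i <= n)%nat -> x i = y i.
Proof.
  rewrite !Phi_odd. intros Hf i Hi.
  apply f_inj in Hf; [|now rewrite length_map, length_seq..].
  assert (Hnth : forall z : nat -> Om, nth i (map z (seq 0 (S n))) (x 0%nat) = z i).
  { intros z. rewrite (nth_indep _ _ (z 0%nat)) by (rewrite length_map, length_seq; lia).
    now rewrite map_nth, seq_nth by lia. }
  now rewrite <- (Hnth x), <- (Hnth y), Hf.
Qed.
End Interleave.

Lemma unordered_pair_eq_of_prefixes {A : Type} (x y u v : nat -> A) n : x n <> y n ->
  (forall j, (n <= j)%nat ->
     (forall i, (i <= j)%nat -> x i = u i /\ y i = v i) \/
     (forall i, (i <= j)%nat -> x i = v i /\ y i = u i)) ->
  (x = u /\ y = v) \/ (x = v /\ y = u).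
Proof.
  intros Hne Hcase.
  destruct (Hcase n (le_n n)) as [Hn|Hn]; [left|right]; split;
    apply functional_extensionality; intros i;
    destruct (Hcase (Nat.max i n) (Nat.le_max_r i n)) as [Hj|Hj];
    solve [apply Hj; lia
          | exfalso; apply Hne;
            destruct (Hn n (le_n n)), (Hj n (Nat.le_max_r i n)); congruence].
Qed.

Section GaugeMetric.
Variables (Om : Type) (Q : nat -> R) (k : nat) (T : R -> Prop).
Variables (r : nat -> Om -> Om -> R) (mu : nat -> nat).
Hypothesis Q_onto : forall x, 0 <= x -> is_rat x -> exists i, Q i = x.
Hypothesis Q_mu : forall m, Q (mu m) = INR m.
Hypothesis mu_least : forall m i, INR m <= Q i < INR m + 1 -> (mu m <= i)%nat.
Hypothesis mu_lt : forall m, (mu m < mu (S m))%nat.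
Hypothesis r_gauge : gauge_system T r.

Let Hlam := lam_super_halving k.

Lemma r_eq0 m x y : r m x y = 0 <-> x = y.
Proof. apply r_gauge. Qed.

Lemma r_sym m x y : r m x y = r m y x.
Proof. apply r_gauge. Qed.

Lemma r_range m x y : x <> y -> INR m < r m x y < INR m + 1.
Proof. intros Hxy. apply r_gauge; auto. Qed.

Lemma r_rigid m : strongly_rigid (r m).
Proof. apply r_gauge. Qed.

Lemma r_zero_or_range m x y : r m x y = 0 \/ INR m < r m x y < INR m + 1.
Proof.
  destruct (classic (x = y)) as [<-|Hxy]; [left; now apply r_eq0|right; now apply r_range].
Qed.

Definition Jidx (X Y : nat -> Om) (m i : nat) : bool := inJ m (r m (X m) (Y m)) (Q i).

Lemma Jidx_band X Y m i : Jidx X Y m i = true -> INR m <= Q i < INR m + 1.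
Proof.
  unfold Jidx. rewrite inJ_iff. pose proof (r_zero_or_range m (X m) (Y m)).
  pose proof (pos_INR m). lra.
Qed.

Lemma Jidx_ge_mu X Y m i : Jidx X Y m i = true -> (mu m <= i)%nat.
Proof. intros Hi. apply mu_least, (Jidx_band X Y m i Hi). Qed.

Lemma Jidx_ge X Y m i : Jidx X Y m i = true -> (m <= i)%nat.
Proof.
  intros Hi. pose proof (strict_mono_ge_id mu mu_lt m). pose proof (Jidx_ge_mu X Y m i Hi). lia.
Qed.

Lemma Jidx_disjoint X Y m m' i : Jidx X Y m i = true -> Jidx X Y m' i = true -> m = m'.
Proof.
  intros Hm Hm'.
  exact (INR_floor_unique m m' (Q i) (Jidx_band _ _ _ _ Hm) (Jidx_band _ _ _ _ Hm')).
Qed.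

Lemma Jidx_mu X Y m : X m <> Y m -> Jidx X Y m (mu m) = true.
Proof.
  intros Hne. unfold Jidx. rewrite Q_mu, inJ_iff. pose proof (r_range m _ _ Hne). lra.
Qed.

Lemma Jidx_eq X Y m i : X m = Y m -> Jidx X Y m i = false.
Proof.
  intros Heq. destruct (Jidx X Y m i) eqn:E; auto.
  unfold Jidx in E. rewrite inJ_iff, Heq, (proj2 (r_eq0 m (Y m) (Y m)) eq_refl) in E.
  pose proof (pos_INR m). lra.
Qed.

Lemma is_series_Lambda X Y :
  is_series (fun m => wsum (lam k) (Jidx X Y m)) (wsum (lam k) (bigcup (Jidx X Y))).
Proof. apply is_series_wsum_bigcup; [exact Hlam|apply Jidx_ge|apply Jidx_disjoint]. Qed.

Lemma Lambda_wsum X Y : Lambda Q k r X Y = wsum (lam k) (bigcup (Jidx X Y)).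
Proof. apply is_series_unique, is_series_Lambda. Qed.

Lemma Lambda_sym X Y : Lambda Q k r X Y = Lambda Q k r Y X.
Proof.
  apply Series_ext. intros m. unfold LambdaM. now rewrite r_sym.
Qed.

Lemma Lambda_le_of_agree X Y n : (forall m, (m < n)%nat -> X m = Y m) ->
  Lambda Q k r X Y <= 2 * lam k n.
Proof.
  intros Hagree. rewrite Lambda_wsum. apply (wsum_tail_le Hlam).
  intros i Hi. apply bigcupP in Hi as [m Hm]; [|apply Jidx_ge].
  destruct (Nat.lt_ge_cases m n) as [Hlt|Hge].
  - now rewrite Jidx_eq in Hm by auto.
  - pose proof (Jidx_ge _ _ _ _ Hm). lia.
Qed.

Lemma Lambda_ge X Y m : X m <> Y m -> lam k (mu m) <= Lambda Q k r X Y.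
Proof.
  intros Hne. rewrite Lambda_wsum. apply (wsum_ge_single Hlam).
  apply bigcupP; [apply Jidx_ge|]. exists m. now apply Jidx_mu.
Qed.

Lemma Lambda_diag X : Lambda Q k r X X = 0.
Proof.
  rewrite Lambda_wsum. apply wsum_eq0. intros i.
  destruct (bigcup (Jidx X X) i) eqn:E; auto.
  apply bigcupP in E as [m Hm]; [|apply Jidx_ge]. now rewrite Jidx_eq in Hm.
Qed.

(* A nonempty band [J(m, _)] starts at index [mu m], so its weight lies in
   [[lam (mu m), 2 lam (mu m)]]: it weighs at most as much as two nonempty ones. *)
Lemma wsum_Jidx_triangle X Y Z m : wsum (lam k) (Jidx X Z m) <=
  wsum (lam k) (Jidx X Y m) + wsum (lam k) (Jidx Y Z m).
Proof.
  pose proof (wsum_ge0 Hlam (Jidx X Y m)). pose proof (wsum_ge0 Hlam (Jidx Y Z m)).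
  destruct (classic (X m = Y m)) as [Exy|Exy].
  - unfold Jidx at 1 3. rewrite Exy. lra.
  - destruct (classic (Y m = Z m)) as [Eyz|Eyz].
    + unfold Jidx at 1 2. rewrite Eyz. lra.
    + pose proof (wsum_tail_le Hlam (Jidx X Z m) (mu m) (Jidx_ge_mu X Z m)).
      pose proof (wsum_ge_single Hlam _ _ (Jidx_mu X Y m Exy)).
      pose proof (wsum_ge_single Hlam _ _ (Jidx_mu Y Z m Eyz)). lra.
Qed.

Lemma Lambda_triangle X Y Z :
  Lambda Q k r X Z <= Lambda Q k r X Y + Lambda Q k r Y Z.
Proof.
  rewrite !Lambda_wsum, <- !(is_series_unique _ _ (is_series_Lambda _ _)).
  rewrite <- Series_plus by (eexists; apply is_series_Lambda).
  apply Series_le.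
  - intros m. split; [apply (wsum_ge0 Hlam)|apply wsum_Jidx_triangle].
  - eexists. apply (is_series_plus _ _ _ _ (is_series_Lambda X Y) (is_series_Lambda Y Z)).
Qed.

Lemma inJ_separates m t t' : (t = 0 \/ INR m < t < INR m + 1) -> INR m < t' -> t < t' ->
  exists i, inJ m t' (Q i) = true /\ inJ m t (Q i) = false.
Proof.
  intros Ht Ht' Hlt. pose proof (pos_INR m).
  assert (Hq : forall q, INR m <= q -> t <= q < t' -> inJ m t' q = true /\ inJ m t q = false).
  { intros q Hmq Hq. split; [apply inJ_iff; lra|].
    apply Bool.not_true_is_false. rewrite inJ_iff. lra. }
  destruct Ht as [->|Ht].
  - exists (mu m). rewrite Q_mu. apply Hq; lra.
  - destruct (rat_between t t' Hlt) as [q [Hq' Hrat]].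
    destruct (Q_onto q ltac:(lra) Hrat) as [i Hi].
    exists i. rewrite Hi. apply Hq; lra.
Qed.

Lemma r_eq_of_Jidx X Y U V m : (forall i, Jidx X Y m i = Jidx U V m i) ->
  r m (X m) (Y m) = r m (U m) (V m).
Proof.
  intros HJ. pose proof (pos_INR m).
  pose proof (r_zero_or_range m (X m) (Y m)) as Hxy.
  pose proof (r_zero_or_range m (U m) (V m)) as Huv.
  destruct (Rtotal_order (r m (X m) (Y m)) (r m (U m) (V m))) as [Hlt|[Heq|Hlt]];
    auto; exfalso.
  - assert (Hm : INR m < r m (U m) (V m)) by (destruct Hxy, Huv; lra).
    destruct (inJ_separates m _ _ Hxy Hm Hlt) as [i [E1 E2]].
    specialize (HJ i). unfold Jidx in HJ. congruence.
  - assert (Hm : INR m < r m (X m) (Y m)) by (destruct Hxy, Huv; lra).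
    destruct (inJ_separates m _ _ Huv Hm Hlt) as [i [E1 E2]].
    specialize (HJ i). unfold Jidx in HJ. congruence.
Qed.

Lemma Jidx_eq_of_bigcup X Y U V :
  (forall i, bigcup (Jidx X Y) i = bigcup (Jidx U V) i) ->
  forall m i, Jidx X Y m i = Jidx U V m i.
Proof.
  assert (Hsub : forall X' Y' U' V' m i,
    (forall i, bigcup (Jidx X' Y') i = bigcup (Jidx U' V') i) ->
    Jidx X' Y' m i = true -> Jidx U' V' m i = true).
  { intros X' Y' U' V' m i HU Hm.
    assert (Hc : bigcup (Jidx U' V') i = true)
      by (rewrite <- HU; apply bigcupP; [apply Jidx_ge|eauto]).
    apply bigcupP in Hc as [m' Hm']; [|apply Jidx_ge].
    now rewrite (INR_floor_unique m m' (Q i) (Jidx_band _ _ _ _ Hm) (Jidx_band _ _ _ _ Hm')). }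
  intros HU m i.
  destruct (Jidx X Y m i) eqn:E1, (Jidx U V m i) eqn:E2; auto.
  - now rewrite (Hsub X Y U V m i HU E1) in E2.
  - now rewrite (Hsub U V X Y m i (fun j => eq_sym (HU j)) E2) in E1.
Qed.

Lemma Lambda_eq_r_eq X Y U V : Lambda Q k r X Y = Lambda Q k r U V ->
  forall m, r m (X m) (Y m) = r m (U m) (V m).
Proof.
  intros HL m. apply r_eq_of_Jidx, Jidx_eq_of_bigcup, (wsum_inj Hlam).
  now rewrite <- !Lambda_wsum.
Qed.

Variable f : nat -> list Om -> Om.

Lemma tLambda_ge x y n : x n <> y n -> lam k (mu (2 * n)) <= tLambda Q k r f x y.
Proof. intros Hne. apply Lambda_ge. now rewrite !Phi_even. Qed.

Lemma tLambda_lt_agree x y n : tLambda Q k r f x y < lam k (mu (2 * n)) ->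
  forall i, (i <= n)%nat -> x i = y i.
Proof.
  intros Hlt i Hi. apply NNPP. intros Hne. pose proof (tLambda_ge x y i Hne).
  pose proof (super_halving_antitone Hlam _ _
    (strict_mono_le mu mu_lt (2 * i) (2 * n) ltac:(lia))). lra.
Qed.

Lemma tLambda_le_of_agree x y n : (forall i, (i < n)%nat -> x i = y i) ->
  tLambda Q k r f x y <= 2 * lam k (2 * n).
Proof. intros Hagree. apply Lambda_le_of_agree, Phi_agree, Hagree. Qed.

Lemma tLambda_diam x y : tLambda Q k r f x y <= 2 * lam k 0.
Proof. apply (tLambda_le_of_agree x y 0). intros i Hi. lia. Qed.

Lemma tLambda_small eps : 0 < eps -> exists n, forall x y,
  (forall i, (i < n)%nat -> x i = y i) -> tLambda Q k r f x y < eps.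
Proof.
  intros Heps. pose proof (super_halving_cvg0 Hlam) as Hcvg.
  apply is_lim_seq_spec in Hcvg. destruct (Hcvg (mkposreal (eps / 2) ltac:(lra))) as [N HN].
  exists N. intros x y Hagree. pose proof (tLambda_le_of_agree x y N Hagree).
  specialize (HN (2 * N)%nat ltac:(lia)). cbn [pos] in HN.
  rewrite Rminus_0_r, Rabs_pos_eq in HN by (left; apply (super_halving_pos Hlam)). lra.
Qed.

Lemma tLambda_is_metric : is_metric (tLambda Q k r f).
Proof.
  split; [|split; [|split]].
  - intros x y. unfold tLambda. rewrite Lambda_wsum. apply (wsum_ge0 Hlam).
  - intros x y. split; [|intros <-; apply Lambda_diag].
    intros H0. apply functional_extensionality. intros n. apply NNPP. intros Hne.
    pose proof (tLambda_ge x y n Hne). pose proof (super_halving_pos Hlam (mu (2 * n))). lra.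
  - intros x y. apply Lambda_sym.
  - intros x y z. apply Lambda_triangle.
Qed.

Lemma tLambda_open U : prod_open U <-> metric_open (tLambda Q k r f) U.
Proof.
  split.
  - intros HU x Hx. destruct (HU x Hx) as [n Hn].
    exists (lam k (mu (2 * n))). split; [apply (super_halving_pos Hlam)|].
    intros y Hy. apply Hn. intros i Hi. symmetry. apply (tLambda_lt_agree x y n Hy). lia.
  - intros HU x Hx. destruct (HU x Hx) as [eps [Heps HUx]].
    destruct (tLambda_small eps Heps) as [n Hn]. exists n.
    intros y Hy. apply HUx, Hn. intros i Hi. symmetry. auto.
Qed.

Lemma tLambda_complete : complete_metric (tLambda Q k r f).
Proof.
  intros u Hcauchy.
  assert (Hstable : forall i, exists N, forall p q,
    (N <= p)%nat -> (N <= q)%nat -> u p i = u q i).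
  { intros i. destruct (Hcauchy _ (super_halving_pos Hlam (mu (2 * i)))) as [N HN].
    exists N. intros p q Hp Hq. exact (tLambda_lt_agree _ _ i (HN p q Hp Hq) i (le_n i)). }
  destruct (choice _ Hstable) as [N HN].
  exists (fun i => u (N i) i). intros eps Heps.
  destruct (tLambda_small eps Heps) as [n Hn].
  destruct (Hcauchy _ (super_halving_pos Hlam (mu (2 * n)))) as [M HM].
  exists M. intros p Hp. apply Hn. intros i Hi.
  transitivity (u (Nat.max M (N i)) i).
  - apply (tLambda_lt_agree _ _ n (HM p _ Hp (Nat.le_max_l _ _))). lia.
  - apply HN; lia.
Qed.

Hypothesis f_inj : inj_on_len f.

(* If [x n <> y n], every odd coordinate [2j+1] with [j >= n] of [Phi] encodes the prefix up
   to [j] and separates [x] from [y]; rigidity of [r (2j+1)] matches the prefixes of [{x, y}]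
   and [{u, v}], necessarily in the same order for all [j]. *)
Lemma tLambda_rigid : strongly_rigid (tLambda Q k r f).
Proof.
  intros x y u v Heq Hne.
  pose proof (Lambda_eq_r_eq _ _ _ _ Heq) as Hr.
  assert (Hxy : exists n, x n <> y n).
  { apply not_all_ex_not. intros Hall. apply Hne, tLambda_is_metric.
    now apply functional_extensionality. }
  destruct Hxy as [n Hn]. apply (unordered_pair_eq_of_prefixes x y u v n Hn).
  intros j Hj.
  assert (Hodd : Phi f x (S (2 * j)) <> Phi f y (S (2 * j))).
  { intros E. apply Hn. exact (Phi_odd_inj f f_inj x y j E n Hj). }
  assert (Hr0 : r (S (2 * j)) (Phi f x (S (2 * j))) (Phi f y (S (2 * j))) <> 0)
    by (rewrite r_eq0; auto).
  destruct (r_rigid _ _ _ _ _ (Hr (S (2 * j))) Hr0) as [[E1 E2]|[E1 E2]];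
    [left|right]; intros i Hi; split; eapply Phi_odd_inj; eauto.
Qed.
End GaugeMetric.

Theorem theorem4p20 (Om : Type) (Q : nat -> R) (k : nat) (S : R -> Prop)
  (r : nat -> Om -> Om -> R) (f : nat -> list Om -> Om) :
  card_continuum Om ->
  enum_nonneg_rat Q -> propM Q ->
  inj_on_len f ->
  ubiq_dense S ->
  gauge_system S r ->
  Met_N (tLambda Q k r f) /\
  (forall x y, tLambda Q k r f x y <= 2 * lam k 0) /\
  complete_metric (tLambda Q k r f) /\
  strongly_rigid (tLambda Q k r f).
Proof.
  intros _ [_ [_ Q_onto]] [mu Hmu] f_inj _ r_gauge.
  assert (Q_mu : forall m, Q (mu m) = INR m) by apply Hmu.
  assert (mu_least : forall m i, INR m <= Q i < INR m + 1 -> (mu m <= i)%nat) by apply Hmu.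
  assert (mu_lt : forall m, (mu m < mu (Datatypes.S m))%nat) by apply Hmu.
  split; [split|split; [|split]].
  - eapply tLambda_is_metric; eassumption.
  - intros U. eapply tLambda_open; eassumption.
  - intros x y. eapply tLambda_diam; eassumption.
  - eapply tLambda_complete; eassumption.
  - eapply tLambda_rigid; eassumption.
Qed.
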